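(* Let $I=[\alpha,\beta]\subset\mathbb R$ and let $f,g:I\to\mathbb R$ be continuous functions such that there exist real numbers $0<m<M$ with $m\le f(x)\le M$ and $m\le g(x)\le M$ for all $x\in I$, and $\max(\|f-g\|_{L^1(I)},\|f-g\|_\infty)<m$. Fix $x_0\in I$ and let $\gamma$ and $\eta$ be the solutions of $\dot x=f(x)$ and $\dot x=g(x)$ respectively with $\gamma(0)=\eta(0)=x_0$, defined (with values in $I$) on intervals of times $J_\gamma$ and $J_\eta$. Then for all $t\in J_\gamma\cap J_\eta$, $$|\gamma(t)-\eta(t)|\le\frac{M}{m^2}\|f-g\|_{L^1(I)}.$$
   Context: $\|\cdot\|_{L^1(I)}$ and $\|\cdot\|_\infty$ are the usual $L^1$ and sup norms on $I$. *)

From Stdlib Require Import Reals.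
From Coquelicot Require Import Coquelicot.
Open Scope R_scope.

Definition Icc (a b : R) : R -> Prop := fun x => a <= x <= b.

Definition L1norm (a b : R) (h : R -> R) : R := RInt (fun x => Rabs (h x)) a b.

Definition supnorm (a b : R) (h : R -> R) : R :=
  real (Lub_Rbar (fun y => exists x, a <= x <= b /\ y = Rabs (h x))).

Definition is_interval (J : R -> Prop) : Prop :=
  forall a b c, J a -> J c -> a <= b <= c -> J b.

(* Derivative of y at t relative to the set J (one-sided at endpoints). *)
Definition is_derive_within (J : R -> Prop) (y : R -> R) (t l : R) : Prop :=
  filterlim (fun s => (y s - y t) / (s - t))
            (within (fun s => J s /\ s <> t) (locally t)) (locally l).

Definition is_solution (a b : R) (F : R -> R) (x0 : R) (J : R -> Prop) (y : R -> R) : Prop :=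
  is_interval J /\ J 0 /\ y 0 = x0 /\
  forall t, J t -> a <= y t <= b /\ is_derive_within J y t (F (y t)).

(* Separating variables, a solution y of x' = F(x) with F >= m > 0 satisfies
   t = ∫_{x0}^{y(t)} du / F(u), because s ↦ ∫_{x0}^{y(s)} du / F(u) - s has zero
   derivative on the interval of times.  Comparing these identities for f and g at a
   common time t gives ∫_{η(t)}^{γ(t)} du / f(u) = ∫_{x0}^{η(t)} (1/g - 1/f); the left
   side is at least |γ(t) - η(t)| / M and the right side at most ‖f - g‖₁ / m².
   To integrate over all of ℝ, f and g are first extended by composing them with the
   projection onto I. *)

From Stdlib Require Import Reals Lra.
From Coquelicot Require Import Coquelicot.
Open Scope R_scope.

(* Increment form of [is_derive_within]; unlike the difference quotient it also makes sense at [s = t]. *)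
Definition derive_incr_within (J : R -> Prop) (y : R -> R) (t l : R) : Prop :=
  forall eps, 0 < eps -> exists d, 0 < d /\
    forall s, J s -> Rabs (s - t) < d ->
      Rabs (y s - y t - (s - t) * l) <= eps * Rabs (s - t).

Lemma Rabs_sub_mul_le_of_div (A h c e : R) :
  h <> 0 -> Rabs (A / h - c) < e -> Rabs (A - h * c) <= e * Rabs h.
Proof.
  intros Hh H.
  replace (A - h * c) with (h * (A / h - c)) by (field; auto).
  rewrite Rabs_mult, Rmult_comm.
  apply Rmult_le_compat_r; [apply Rabs_pos | lra].
Qed.

Lemma derive_incr_of_quotient (J : R -> Prop) (y : R -> R) (t l eps d : R) :
  (forall s, J s -> s <> t -> Rabs (s - t) < d ->
     Rabs ((y s - y t) / (s - t) - l) < eps) ->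
  forall s, J s -> Rabs (s - t) < d ->
    Rabs (y s - y t - (s - t) * l) <= eps * Rabs (s - t).
Proof.
  intros Hq s Js Hs.
  destruct (Req_dec s t) as [-> | Hst].
  - rewrite !Rminus_diag, Rmult_0_l, Rminus_0_r, Rabs_R0; lra.
  - apply Rabs_sub_mul_le_of_div; [lra | exact (Hq s Js Hst Hs)].
Qed.

Lemma is_derive_within_incr (J : R -> Prop) (y : R -> R) (t l : R) :
  is_derive_within J y t l -> derive_incr_within J y t l.
Proof.
  intros H eps He.
  destruct (proj1 (filterlim_locally _ _) H (mkposreal eps He)) as [d Hd].
  exists d; split; [apply cond_pos |].
  apply derive_incr_of_quotient.
  intros s Js Hst Hs; exact (Hd s Hs (conj Js Hst)).
Qed.

Lemma is_derive_incr (J : R -> Prop) (F : R -> R) (x l : R) :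
  is_derive F x l -> derive_incr_within J F x l.
Proof.
  intros H eps He.
  destruct (proj1 (is_derive_Reals F x l) H eps He) as [d Hd].
  exists d; split; [apply cond_pos |].
  apply derive_incr_of_quotient.
  intros s _ Hst Hs.
  specialize (Hd (s - x) ltac:(lra) Hs).
  now replace (x + (s - x)) with s in Hd by ring.
Qed.

Lemma derive_incr_within_subset (J K : R -> Prop) (y : R -> R) (t l : R) :
  (forall s, J s -> K s) -> derive_incr_within K y t l -> derive_incr_within J y t l.
Proof.
  intros JK H eps He.
  destruct (H eps He) as [d [Hd Hs]].
  exists d; split; auto.
Qed.

Lemma derive_incr_within_minus (J : R -> Prop) (u v : R -> R) (t lu lv : R) :
  derive_incr_within J u t lu -> derive_incr_within J v t lv ->
  derive_incr_within J (fun s => u s - v s) t (lu - lv).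
Proof.
  intros Hu Hv eps He.
  destruct (Hu (eps / 2) ltac:(lra)) as [du [Hdu Bu]].
  destruct (Hv (eps / 2) ltac:(lra)) as [dv [Hdv Bv]].
  exists (Rmin du dv); split; [now apply Rmin_pos |].
  intros s Js Hs.
  assert (Su := Bu s Js (Rlt_le_trans _ _ _ Hs (Rmin_l du dv))).
  assert (Sv := Bv s Js (Rlt_le_trans _ _ _ Hs (Rmin_r du dv))).
  replace (u s - v s - (u t - v t) - (s - t) * (lu - lv))
    with ((u s - u t - (s - t) * lu) + - (v s - v t - (s - t) * lv)) by ring.
  eapply Rle_trans; [apply Rabs_triang |].
  rewrite Rabs_Ropp; lra.
Qed.

Lemma derive_incr_within_lipschitz (J : R -> Prop) (y : R -> R) (t l : R) :
  derive_incr_within J y t l -> exists d, 0 < d /\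
    forall s, J s -> Rabs (s - t) < d -> Rabs (y s - y t) <= (Rabs l + 1) * Rabs (s - t).
Proof.
  intros Hy.
  destruct (Hy 1 Rlt_0_1) as [d [Hd B]].
  exists d; split; [exact Hd |]; intros s Js Hs.
  specialize (B s Js Hs).
  replace (y s - y t) with ((y s - y t - (s - t) * l) + (s - t) * l) by ring.
  eapply Rle_trans; [apply Rabs_triang |].
  rewrite Rabs_mult; lra.
Qed.

Lemma derive_incr_within_comp (J : R -> Prop) (Phi y : R -> R) (t l dPhi : R) :
  is_derive Phi (y t) dPhi -> derive_incr_within J y t l ->
  derive_incr_within J (fun s => Phi (y s)) t (l * dPhi).
Proof.
  intros HPhi Hy eps He.
  set (c := Rabs l + 1).
  set (c' := Rabs dPhi + 1).
  assert (Hc : 0 < c) by (unfold c; pose proof (Rabs_pos l); lra).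
  assert (Hc' : 0 < c') by (unfold c'; pose proof (Rabs_pos dPhi); lra).
  destruct (derive_incr_within_lipschitz J y t l Hy) as [d0 [Hd0 L]].
  destruct (is_derive_incr (fun _ => True) Phi (y t) dPhi HPhi (eps / (2 * c)))
    as [d1 [Hd1 B1]]; [apply Rdiv_lt_0_compat; lra |].
  destruct (Hy (eps / (2 * c'))) as [d2 [Hd2 B2]]; [apply Rdiv_lt_0_compat; lra |].
  exists (Rmin d0 (Rmin d2 (d1 / c))); split.
  { repeat apply Rmin_pos; try apply Rdiv_lt_0_compat; lra. }
  intros s Js Hs.
  assert (Hst := Rabs_pos (s - t)).
  assert (Hs0 : Rabs (s - t) < d0) by (eapply Rlt_le_trans; [exact Hs | apply Rmin_l]).
  assert (Hs2 : Rabs (s - t) < d2)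
    by (eapply Rlt_le_trans; [exact Hs | eapply Rle_trans; [apply Rmin_r | apply Rmin_l]]).
  assert (Hs1 : Rabs (s - t) < d1 / c)
    by (eapply Rlt_le_trans; [exact Hs | eapply Rle_trans; [apply Rmin_r | apply Rmin_r]]).
  specialize (L s Js Hs0); specialize (B2 s Js Hs2); fold c in L.
  set (h := y s - y t) in *.
  assert (Hh : Rabs (y t + h - y t) < d1).
  { replace (y t + h - y t) with h by ring.
    apply Rle_lt_trans with (c * Rabs (s - t)); [exact L |].
    replace d1 with (c * (d1 / c)) by (field; lra).
    apply Rmult_lt_compat_l; lra. }
  specialize (B1 (y t + h) I Hh).
  replace (y t + h - y t) with h in B1 by ring.
  replace (y t + h) with (y s) in B1 by (unfold h; ring).
  replace (Phi (y s) - Phi (y t) - (s - t) * (l * dPhi))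
    with ((Phi (y s) - Phi (y t) - h * dPhi) + (h - (s - t) * l) * dPhi) by ring.
  eapply Rle_trans; [apply Rabs_triang |].
  rewrite Rabs_mult.
  assert (T1 : eps / (2 * c) * Rabs h <= eps / 2 * Rabs (s - t)).
  { apply Rle_trans with (eps / (2 * c) * (c * Rabs (s - t))).
    - apply Rmult_le_compat_l; [apply Rlt_le, Rdiv_lt_0_compat; lra | exact L].
    - right; field; lra. }
  assert (T2 : Rabs (h - (s - t) * l) * Rabs dPhi <= eps / 2 * Rabs (s - t)).
  { apply Rle_trans with (eps / (2 * c') * Rabs (s - t) * c').
    - apply Rmult_le_compat; auto using Rabs_pos; unfold c'; lra.
    - right; field; lra. }
  lra.
Qed.

Definition clamp (a b x : R) : R := Rmax a (Rmin b x).

Lemma clamp_in (a b x : R) : a <= b -> a <= clamp a b x <= b.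
Proof. intros; unfold clamp, Rmax, Rmin; repeat destruct Rle_dec; lra. Qed.

Lemma clamp_id (a b x : R) : a <= x <= b -> clamp a b x = x.
Proof. intros; unfold clamp, Rmax, Rmin; repeat destruct Rle_dec; lra. Qed.

Lemma Rabs_clamp_sub_le (a b x y : R) :
  a <= b -> Rabs (clamp a b y - clamp a b x) <= Rabs (y - x).
Proof.
  intros; unfold clamp, Rmax, Rmin, Rabs.
  repeat destruct Rle_dec; repeat destruct Rcase_abs; lra.
Qed.

Lemma continuous_clamp_comp (a b : R) (f : R -> R) :
  a <= b -> continuous_on (Icc a b) f -> forall x, continuous (fun z => f (clamp a b z)) x.
Proof.
  intros Hab Cf x.
  apply (filterlim_comp _ _ _ (clamp a b) f _ (within (Icc a b) (locally (clamp a b x)))).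
  - intros P [eps HP]; exists eps; intros z Hz; apply HP.
    + exact (Rle_lt_trans _ _ _ (Rabs_clamp_sub_le a b x z Hab) Hz).
    + now apply clamp_in.
  - apply Cf; now apply clamp_in.
Qed.

Lemma is_derive_clamp_comp_0 (a b : R) (phi : R -> R) :
  a <= b -> (forall t, Icc a b t -> derive_incr_within (Icc a b) phi t 0) ->
  forall x, is_derive (fun z => phi (clamp a b z)) x 0.
Proof.
  intros Hab Hphi x; apply is_derive_Reals; intros eps He.
  destruct (Hphi _ (clamp_in a b x Hab) (eps / 2) ltac:(lra)) as [d [Hd B]].
  exists (mkposreal d Hd); intros h Hh0 Hh.
  assert (Lip := Rabs_clamp_sub_le a b x (x + h) Hab).
  replace (x + h - x) with h in Lip by ring.
  specialize (B (clamp a b (x + h)) (clamp_in a b _ Hab) (Rle_lt_trans _ _ _ Lip Hh)).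
  rewrite Rmult_0_r, Rminus_0_r in B.
  rewrite Rminus_0_r; unfold Rdiv; rewrite Rabs_mult, Rabs_inv.
  assert (0 < Rabs h) by now apply Rabs_pos_lt.
  apply Rle_lt_trans with (eps / 2 * Rabs h * / Rabs h).
  - apply Rmult_le_compat_r; [apply Rlt_le, Rinv_0_lt_compat; lra |].
    eapply Rle_trans; [exact B | apply Rmult_le_compat_l; lra].
  - field_simplify; lra.
Qed.

Lemma derive_incr_within_0_const (J : R -> Prop) (phi : R -> R) :
  is_interval J -> (forall t, J t -> derive_incr_within J phi t 0) ->
  forall a b, J a -> J b -> phi a = phi b.
Proof.
  intros HJ Hphi.
  assert (Hle : forall a b, J a -> J b -> a <= b -> phi a = phi b).
  { intros a b Ja Jb Hab.
    assert (Sub : forall s, Icc a b s -> J s) by (intros s Hs; exact (HJ a s b Ja Jb Hs)).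
    assert (D := is_derive_clamp_comp_0 a b phi Hab
                   (fun t Ht => derive_incr_within_subset _ _ _ _ _ Sub (Hphi t (Sub t Ht)))).
    destruct (MVT_gen (fun z => phi (clamp a b z)) a b (fun _ => 0)) as [c [_ Hc]].
    - intros x _; apply D.
    - intros x _; apply (continuity_pt_filterlim (fun z => phi (clamp a b z))).
      apply (ex_derive_continuous (V := R_NormedModule) (fun z => phi (clamp a b z))).
      exists 0; apply D.
    - rewrite !clamp_id in Hc by lra; lra. }
  intros a b Ja Jb.
  destruct (Rle_dec a b); [| symmetry]; apply Hle; auto; lra.
Qed.

Lemma derive_incr_within_id (J : R -> Prop) (t : R) : derive_incr_within J (fun s => s) t 1.
Proof.
  intros eps He; exists 1; split; [lra |]; intros s _ _.
  rewrite Rmult_1_r, Rminus_diag, Rabs_R0.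
  apply Rmult_le_pos; [lra | apply Rabs_pos].
Qed.

Lemma ex_RInt_continuous_R (h : R -> R) (p q : R) :
  (forall x, continuous h x) -> ex_RInt h p q.
Proof. intros C; apply (ex_RInt_continuous (V := R_CompleteNormedModule)); auto. Qed.

Lemma is_derive_RInt_inv (F : R -> R) (p v : R) :
  (forall x, continuous F x) -> (forall x, F x <> 0) ->
  is_derive (fun w => RInt (fun u => / F u) p w) v (/ F v).
Proof.
  intros C N.
  assert (Cinv : forall x, continuous (fun u => / F u) x)
    by (intro x; apply continuous_Rinv_comp; auto).
  apply (is_derive_RInt (fun u => / F u) _ p); [| apply Cinv].
  exists (mkposreal 1 Rlt_0_1); intros w _.
  apply (RInt_correct (V := R_CompleteNormedModule)), ex_RInt_continuous_R, Cinv.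
Qed.

Lemma is_solution_RInt_inv (a b : R) (F : R -> R) (x0 : R) (J : R -> Prop) (y : R -> R) :
  (forall x, continuous F x) -> (forall x, F x <> 0) -> is_solution a b F x0 J y ->
  forall t, J t -> RInt (fun u => / F u) x0 (y t) = t.
Proof.
  intros C N [HJ [J0 [y0 Hy]]] t Jt.
  set (phi := fun s => RInt (fun u => / F u) x0 (y s) - s).
  assert (Dphi : forall s, J s -> derive_incr_within J phi s 0).
  { intros s Js.
    replace 0 with (F (y s) * / F (y s) - 1) by (field; apply N).
    apply derive_incr_within_minus; [| apply derive_incr_within_id].
    apply derive_incr_within_comp; [now apply is_derive_RInt_inv |].
    apply is_derive_within_incr, (Hy s Js). }
  assert (E := derive_incr_within_0_const J phi HJ Dphi t 0 Jt J0).
  unfold phi in E; rewrite y0, RInt_point in E.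
  unfold zero in E; simpl in E; lra.
Qed.

Lemma Rabs_RInt_swap (h : R -> R) (p q : R) :
  (forall x, continuous h x) -> Rabs (RInt h q p) = Rabs (RInt h p q).
Proof.
  intros C.
  rewrite <- (opp_RInt_swap h p q) by now apply ex_RInt_continuous_R.
  apply Rabs_Ropp.
Qed.

Lemma Rabs_RInt_ge_const (h : R -> R) (c p q : R) :
  (forall x, continuous h x) -> 0 <= c -> (forall x, c <= h x) ->
  c * Rabs (q - p) <= Rabs (RInt h p q).
Proof.
  intros C Hc Hh.
  assert (Hle : forall p q, p <= q -> c * Rabs (q - p) <= Rabs (RInt h p q)).
  { intros p' q' Hpq.
    assert (Hint : c * (q' - p') <= RInt h p' q').
    { replace (c * (q' - p')) with (RInt (fun _ => c) p' q')
        by (rewrite RInt_const; unfold scal; simpl; unfold mult; simpl; ring).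
      apply RInt_le; auto using ex_RInt_continuous_R, continuous_const. }
    rewrite Rabs_right, (Rabs_right (RInt h p' q')); [lra | | lra]; nra. }
  destruct (Rle_dec p q); [now apply Hle |].
  rewrite <- Rabs_RInt_swap, <- Rabs_Ropp by exact C.
  replace (- (q - p)) with (p - q) by ring.
  apply Hle; lra.
Qed.

Lemma Rabs_RInt_le_RInt (h k : R -> R) (a b p q : R) :
  (forall x, continuous h x) -> (forall x, continuous k x) ->
  (forall x, Rabs (h x) <= k x) -> a <= p <= b -> a <= q <= b ->
  Rabs (RInt h p q) <= RInt k a b.
Proof.
  intros Ch Ck Hk Hp Hq.
  assert (k0 : forall x, 0 <= k x) by (intro x; eapply Rle_trans; [apply Rabs_pos | apply Hk]).
  assert (Hle : forall p q, a <= p -> p <= q -> q <= b -> Rabs (RInt h p q) <= RInt k a b).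
  { intros p' q' Hap Hpq Hqb.
    eapply Rle_trans; [apply abs_RInt_le; auto using ex_RInt_continuous_R |].
    apply Rle_trans with (RInt k p' q').
    { apply RInt_le; auto using ex_RInt_continuous_R, continuous_Rabs_comp. }
    rewrite <- (RInt_Chasles k a p' b), <- (RInt_Chasles k p' q' b)
      by auto using ex_RInt_continuous_R.
    assert (0 <= RInt k a p') by (apply RInt_ge_0; auto using ex_RInt_continuous_R).
    assert (0 <= RInt k q' b) by (apply RInt_ge_0; auto using ex_RInt_continuous_R).
    unfold plus; simpl; lra. }
  destruct (Rle_dec p q); [apply Hle; lra |].
  rewrite <- Rabs_RInt_swap by exact Ch.
  apply Hle; lra.
Qed.

Lemma Rabs_Rinv_sub_le (m x y : R) :
  0 < m -> m <= x -> m <= y -> Rabs (/ y - / x) <= / m ^ 2 * Rabs (x - y).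
Proof.
  intros Hm Hx Hy.
  replace (/ y - / x) with ((x - y) * / (x * y)) by (field; lra).
  rewrite Rabs_mult, (Rabs_right (/ (x * y))) by (apply Rle_ge, Rlt_le, Rinv_0_lt_compat; nra).
  rewrite Rmult_comm; apply Rmult_le_compat_r; [apply Rabs_pos |].
  apply Rinv_le_contravar; simpl; nra.
Qed.

Lemma is_solution_dist_le (a b : R) (F G : R -> R) (m M x0 : R)
  (Jy Jz : R -> Prop) (y z : R -> R) :
  (forall x, continuous F x) -> (forall x, continuous G x) -> 0 < m ->
  (forall x, m <= F x <= M /\ m <= G x <= M) ->
  is_solution a b F x0 Jy y -> is_solution a b G x0 Jz z ->
  forall t, Jy t -> Jz t ->
    Rabs (y t - z t) <= M / m ^ 2 * RInt (fun x => Rabs (F x - G x)) a b.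
Proof.
  intros CF CG Hm HFG Sy Sz t Jyt Jzt.
  assert (NF : forall x, F x <> 0) by (intro x; destruct (HFG x); lra).
  assert (NG : forall x, G x <> 0) by (intro x; destruct (HFG x); lra).
  assert (CiF : forall x, continuous (fun u => / F u) x)
    by (intro x; apply continuous_Rinv_comp; auto).
  assert (CiG : forall x, continuous (fun u => / G u) x)
    by (intro x; apply continuous_Rinv_comp; auto).
  assert (CFG : forall x, continuous (fun u => Rabs (F u - G u)) x)
    by (intro x; apply continuous_Rabs_comp, (continuous_minus F G); auto).
  assert (Hx0 : a <= x0 <= b)
    by (destruct Sy as [_ [J0 [<- Hy]]]; exact (proj1 (Hy 0 J0))).
  assert (Hyt : a <= y t <= b) by (destruct Sy as [_ [_ [_ Hy]]]; exact (proj1 (Hy t Jyt))).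
  assert (Hzt : a <= z t <= b) by (destruct Sz as [_ [_ [_ Hz]]]; exact (proj1 (Hz t Jzt))).
  assert (Ey := is_solution_RInt_inv a b F x0 Jy y CF NF Sy t Jyt).
  assert (Ez := is_solution_RInt_inv a b G x0 Jz z CG NG Sz t Jzt).
  assert (Key : RInt (fun u => / F u) (z t) (y t)
                = RInt (fun u => / G u - / F u) x0 (z t)).
  { assert (Ch := RInt_Chasles (fun u => / F u) x0 (z t) (y t)
                    (ex_RInt_continuous_R _ _ _ CiF) (ex_RInt_continuous_R _ _ _ CiF)).
    assert (Mi := RInt_minus (fun u => / G u) (fun u => / F u) x0 (z t)
                    (ex_RInt_continuous_R _ _ _ CiG) (ex_RInt_continuous_R _ _ _ CiF)).
    unfold plus, minus, opp in Ch, Mi; simpl in Ch, Mi.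
    unfold plus, opp in Mi; simpl in Mi.
    unfold Rminus; rewrite Mi; lra. }
  assert (Lower : / M * Rabs (y t - z t) <= Rabs (RInt (fun u => / F u) (z t) (y t))).
  { apply Rabs_RInt_ge_const; auto.
    - apply Rlt_le, Rinv_0_lt_compat; destruct (HFG 0); lra.
    - intro x; destruct (HFG x) as [[? ?] _]; apply Rinv_le_contravar; lra. }
  assert (Upper : Rabs (RInt (fun u => / G u - / F u) x0 (z t))
                  <= / m ^ 2 * RInt (fun x => Rabs (F x - G x)) a b).
  { rewrite <- (RInt_scal (V := R_CompleteNormedModule)) by now apply ex_RInt_continuous_R.
    apply Rabs_RInt_le_RInt; auto.
    - intro x; apply (continuous_minus (fun u => / G u) (fun u => / F u)); auto.
    - intro x; apply (continuous_scal_r (K := R_AbsRing) (V := R_NormedModule)), CFG.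
    - intro x; destruct (HFG x) as [[? _] [? _]]; now apply Rabs_Rinv_sub_le. }
  assert (HM : 0 < M) by (destruct (HFG 0); lra).
  rewrite Key in Lower.
  apply (Rmult_le_reg_l (/ M)); [now apply Rinv_0_lt_compat |].
  replace (/ M * (M / m ^ 2 * RInt (fun x => Rabs (F x - G x)) a b))
    with (/ m ^ 2 * RInt (fun x => Rabs (F x - G x)) a b) by (field; lra).
  lra.
Qed.

Lemma is_solution_ext (a b : R) (F G : R -> R) (x0 : R) (J : R -> Prop) (y : R -> R) :
  (forall x, a <= x <= b -> F x = G x) ->
  is_solution a b F x0 J y -> is_solution a b G x0 J y.
Proof.
  intros EFG [HJ [J0 [y0 Hy]]].
  split; [exact HJ | split; [exact J0 | split; [exact y0 |]]].
  intros t Jt; destruct (Hy t Jt) as [Hyt Dyt].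
  split; [exact Hyt | now rewrite <- EFG].
Qed.

Theorem lemma4p1 (alpha beta : R) (f g : R -> R) (m M : R) (x0 : R)
  (Jgamma Jeta : R -> Prop) (gamma eta : R -> R) :
  alpha <= beta ->
  continuous_on (Icc alpha beta) f ->
  continuous_on (Icc alpha beta) g ->
  0 < m -> m < M ->
  (forall x, alpha <= x <= beta -> m <= f x <= M /\ m <= g x <= M) ->
  Rmax (L1norm alpha beta (fun x => f x - g x))
       (supnorm alpha beta (fun x => f x - g x)) < m ->
  alpha <= x0 <= beta ->
  is_solution alpha beta f x0 Jgamma gamma ->
  is_solution alpha beta g x0 Jeta eta ->
  forall t, Jgamma t -> Jeta t ->
    Rabs (gamma t - eta t) <= M / (m ^ 2) * L1norm alpha beta (fun x => f x - g x).
Proof.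
  intros Hab Cf Cg Hm _ Hfg _ _ Sgamma Seta t Jgt Jet.
  set (fc := fun x => f (clamp alpha beta x)).
  set (gc := fun x => g (clamp alpha beta x)).
  assert (Efc : forall x, alpha <= x <= beta -> f x = fc x)
    by (intros; unfold fc; now rewrite clamp_id).
  assert (Egc : forall x, alpha <= x <= beta -> g x = gc x)
    by (intros; unfold gc; now rewrite clamp_id).
  replace (L1norm alpha beta (fun x => f x - g x))
    with (RInt (fun x => Rabs (fc x - gc x)) alpha beta).
  - apply (is_solution_dist_le alpha beta fc gc m M x0 Jgamma Jeta); auto.
    + now apply continuous_clamp_comp.
    + now apply continuous_clamp_comp.
    + intro x; apply Hfg, clamp_in, Hab.
    + exact (is_solution_ext _ _ _ _ _ _ _ Efc Sgamma).
    + exact (is_solution_ext _ _ _ _ _ _ _ Egc Seta).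
  - apply RInt_ext; intros x Hx.
    rewrite Rmin_left, Rmax_right in Hx by exact Hab.
    rewrite Efc, Egc by lra; reflexivity.
Qed.
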